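(* In the setting of the context, fix $n\ge1$ and for each $k\ge n$ let $\hat{\mathbb{F}}^n_k$ be the distribution of $(X_{\delta_n},X_{2\delta_n}-X_{\delta_n},\dots,X_{2^n\delta_n}-X_{(2^n-1)\delta_n})$ under $\hat{\mathbb{E}}^k$, i.e. $\hat{\mathbb{F}}^n_k[\varphi]=\hat{\mathbb{E}}^k[\varphi(X_{\delta_n},\dots,X_{2^n\delta_n}-X_{(2^n-1)\delta_n})]$ for $\varphi\in C_{b.Lip}(\mathbb{R}^{2^n\times2d})$. Then $\{\hat{\mathbb{F}}^n_k:k\ge n\}$ is tight, i.e. there is a tight sublinear expectation $\hat{\mathbb{F}}$ on $(\mathbb{R}^{2^n\times2d},C_{b.Lip}(\mathbb{R}^{2^n\times2d}))$ such that $\hat{\mathbb{F}}^n_k[\varphi]-\hat{\mathbb{F}}^n_k[\phi]\le\hat{\mathbb{F}}[\varphi-\phi]$ for all $k\ge n$ and all $\varphi,\phi$.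
   Context: $C_{b.Lip}(\mathbb{R}^m)$: bounded Lipschitz functions. Sublinear expectation space $(\Omega,\mathcal{H},\hat{\mathbb{E}})$: $\mathcal{H}$ a linear space of real functions on $\Omega$ closed under composition with $C_{b.Lip}$ functions; $\hat{\mathbb{E}}$ monotone, constant preserving, subadditive, positively homogeneous. Setting: $(M_t)_{t\ge0}$, $(N_t)_{t\ge0}$ are $d$-dimensional processes with independent increments (with $M_0=N_0=0$, and for $t_1<\dots<t_m$ the last increment independent from the earlier values, where $Y$ is independent from $X$ under $\hat{\mathbb{E}}$ iff $\hat{\mathbb{E}}[\varphi(X,Y)]=\hat{\mathbb{E}}[\hat{\mathbb{E}}[\varphi(x,Y)]_{x=X}]$) on sublinear expectation spaces $(\Omega_i,\mathcal{H}_i,\hat{\mathbb{E}}_i)$, $i=1,2$, satisfying (A): there are sublinear $\tilde{\mathbb{E}}_i$ on $\mathcal{H}_i$ with $\hat{\mathbb{E}}_i[X]-\hat{\mathbb{E}}_i[Y]\le\tilde{\mathbb{E}}_i[X-Y]$ and $\lim_{s\to t}(\tilde{\mathbb{E}}_1[|M_s-M_t|]+\tilde{\mathbb{E}}_2[|N_s-N_t|])=0$ for every $t\ge0$. Put $\Omega=\Omega_1\times\Omega_2$, $\tilde M_t(\omega_1,\omega_2)=M_t(\omega_1)$, $\tilde N_t(\omega_1,\omega_2)=N_t(\omega_2)$, $X_t=(\tilde M_t,\tilde N_t)$ for $t\in[0,1]$, $\delta_m=2^{-m}$. For $m\ge1$, $\mathcal{H}^m=\{\varphi(X_{\delta_m},X_{2\delta_m}-X_{\delta_m},\dots,X_{2^m\delta_m}-X_{(2^m-1)\delta_m}):\varphi\in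 C_{b.Lip}(\mathbb{R}^{2^m\times2d})\}$ (note $\mathcal{H}^n\subset\mathcal{H}^k$ for $k\ge n$), and $\hat{\mathbb{E}}^m:\mathcal{H}^m\to\mathbb{R}$ is defined by: for a single increment, $\hat{\mathbb{E}}^m[\phi(X_{j\delta_m}-X_{(j-1)\delta_m})]=\hat{\mathbb{E}}_1[\psi(M_{j\delta_m}-M_{(j-1)\delta_m})]$ with $\psi(x)=\hat{\mathbb{E}}_2[\phi(x,N_{j\delta_m}-N_{(j-1)\delta_m})]$; in general $\hat{\mathbb{E}}^m[\varphi(X_{\delta_m},\dots,X_{2^m\delta_m}-X_{(2^m-1)\delta_m})]=\varphi_0$, where $\varphi_{2^m}=\varphi$ and $\varphi_{j-1}(x_1,\dots,x_{j-1})=\hat{\mathbb{E}}^m[\varphi_j(x_1,\dots,x_{j-1},X_{j\delta_m}-X_{(j-1)\delta_m})]$ (single-increment rule) for $j=2^m,\dots,1$. A sublinear expectation $\hat{\mathbb{F}}$ on $(\mathbb{R}^p,C_{b.Lip}(\mathbb{R}^p))$ is tight if for each $\varepsilon>0$ there exist $N>0$ and $\varphi\in C_{b.Lip}(\mathbb{R}^p)$ with $I_{\{|x|\ge N\}}\le\varphi$ and $\hat{\mathbb{F}}[\varphi]<\varepsilon$. *)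

From HB Require Import structures.
From mathcomp Require Import all_boot all_order all_algebra.
From mathcomp Require Import reals.
Set Implicit Arguments. Unset Strict Implicit. Unset Printing Implicit Defensive.
Import Order.TTheory GRing.Theory Num.Theory.
Local Open Scope ring_scope.

Section Defs.
Variable R : realType.

Definition vnorm (I : finType) (x : I -> R) : R := Num.sqrt (\sum_i x i ^+ 2).

Definition bLip (I : finType) (f : (I -> R) -> R) : Prop :=
  (exists C : R, forall x, `|f x| <= C) /\
  (exists L : R, forall x y, `|f x - f y| <= L * vnorm (fun i => x i - y i)).

Definition linear_space (Om : Type) (H : (Om -> R) -> Prop) : Prop :=
  [/\ H (fun _ => 0),
      (forall X Y, H X -> H Y -> H (fun w => X w + Y w)) &
      (forall (a : R) X, H X -> H (fun w => a * X w))].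

Definition bLip_closed (Om : Type) (H : (Om -> R) -> Prop) : Prop :=
  forall (I : finType) (X : I -> Om -> R) (phi : (I -> R) -> R),
    (forall i, H (X i)) -> bLip phi -> H (fun w => phi (fun i => X i w)).

Definition sublinear_expectation (Om : Type) (H : (Om -> R) -> Prop)
    (E : (Om -> R) -> R) : Prop :=
  [/\ (forall X Y, H X -> H Y -> (forall w, X w <= Y w) -> E X <= E Y),
      (forall c : R, E (fun _ => c) = c),
      (forall X Y, H X -> H Y -> E (fun w => X w + Y w) <= E X + E Y) &
      (forall (a : R) X, H X -> 0 <= a -> E (fun w => a * X w) = a * E X)].

Definition sublinear_space (Om : Type) (H : (Om -> R) -> Prop)
    (E : (Om -> R) -> R) : Prop :=
  [/\ linear_space H, bLip_closed H & sublinear_expectation H E].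

Definition in_H (Om : Type) (H : (Om -> R) -> Prop) (I : finType)
    (X : Om -> I -> R) : Prop := forall i, H (fun w => X w i).

Definition join (I J : finType) (x : I -> R) (y : J -> R) : (I + J)%type -> R :=
  fun s => match s with inl i => x i | inr j => y j end.

Definition indep (Om : Type) (E : (Om -> R) -> R) (I J : finType)
    (X : Om -> I -> R) (Y : Om -> J -> R) : Prop :=
  forall phi : ((I + J)%type -> R) -> R, bLip phi ->
    E (fun w => phi (join (X w) (Y w))) =
    E (fun w => (fun x => E (fun w' => phi (join x (Y w')))) (X w)).

(* d-dimensional process with independent increments:
   M_0 = 0, M_t in H for t >= 0, and for 0 <= t_0 < t_1 < ... < t_{k+1}
   the last increment M_{t_{k+1}} - M_{t_k} is independent from
   (M_{t_0}, ..., M_{t_k}). *)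
Definition indep_incr (Om : Type) (H : (Om -> R) -> Prop) (E : (Om -> R) -> R)
    (d : nat) (M : R -> Om -> 'I_d -> R) : Prop :=
  [/\ (forall w i, M 0 w i = 0),
      (forall t, 0 <= t -> in_H H (M t)) &
      (forall (k : nat) (t : 'I_k.+2 -> R),
          0 <= t ord0 -> (forall i j : 'I_k.+2, (i < j)%N -> t i < t j) ->
          indep E (fun w (p : ('I_k.+1 * 'I_d)%type) =>
                     M (t (widen_ord (leqnSn _) p.1)) w p.2)
                  (fun w i => M (t ord_max) w i - M (t (inord k)) w i))].

Definition condA (Om1 Om2 : Type) (H1 : (Om1 -> R) -> Prop) (H2 : (Om2 -> R) -> Prop)
    (E1 : (Om1 -> R) -> R) (E2 : (Om2 -> R) -> R) (d : nat)
    (M : R -> Om1 -> 'I_d -> R) (N : R -> Om2 -> 'I_d -> R) : Prop :=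
  exists (Et1 : (Om1 -> R) -> R) (Et2 : (Om2 -> R) -> R),
    [/\ sublinear_expectation H1 Et1 /\ sublinear_expectation H2 Et2,
        (forall X Y, H1 X -> H1 Y -> E1 X - E1 Y <= Et1 (fun w => X w - Y w)),
        (forall X Y, H2 X -> H2 Y -> E2 X - E2 Y <= Et2 (fun w => X w - Y w)) &
        (forall s t, 0 <= s -> 0 <= t ->
           H1 (fun w => vnorm (fun i => M s w i - M t w i)) /\
           H2 (fun w => vnorm (fun i => N s w i - N t w i))) /\
        (forall t, 0 <= t -> forall eps : R, 0 < eps -> exists delta : R,
           0 < delta /\ forall s, 0 <= s -> `|s - t| < delta ->
             Et1 (fun w => vnorm (fun i => M s w i - M t w i)) +
             Et2 (fun w => vnorm (fun i => N s w i - N t w i)) < eps)].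

(* R^{2d}, coordinates of X_t = (M~_t, N~_t) *)
Definition V (d : nat) := ('I_d + 'I_d)%type.

Definition dyad (m : nat) : R := ((2 : R) ^+ m)^-1.

Definition incrE (Om1 Om2 : Type) (E1 : (Om1 -> R) -> R) (E2 : (Om2 -> R) -> R)
    (d : nat) (M : R -> Om1 -> 'I_d -> R) (N : R -> Om2 -> 'I_d -> R)
    (a b : R) (g : (V d -> R) -> R) : R :=
  E1 (fun w1 => (fun x => E2 (fun w2 =>
        g (join x (fun i => N b w2 i - N a w2 i))))
      (fun i => M b w1 i - M a w1 i)).

(* phi_c (vector of increments y, only y_0..y_{c-1} matter), computed with
   r = 2^m - c remaining steps:
   phi_c(y) = single-increment expectation on [c delta, (c+1) delta] of
              z |-> phi_{c+1}(y with y_c := z). *)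
Fixpoint iterE (Om1 Om2 : Type) (E1 : (Om1 -> R) -> R) (E2 : (Om2 -> R) -> R)
    (d : nat) (M : R -> Om1 -> 'I_d -> R) (N : R -> Om2 -> 'I_d -> R)
    (delta : R) (f : (nat -> V d -> R) -> R) (r c : nat) (y : nat -> V d -> R) : R :=
  match r with
  | 0 => f y
  | r'.+1 => incrE E1 E2 M N (c%:R * delta) (c.+1%:R * delta)
               (fun z => iterE E1 E2 M N delta f r' c.+1
                            (fun l => if l == c then z else y l))
  end.

(* E^m applied to f(increments), increments indexed by nat (only 0..2^m-1 used) *)
Definition Ehat_nat (Om1 Om2 : Type) (E1 : (Om1 -> R) -> R) (E2 : (Om2 -> R) -> R)
    (d : nat) (M : R -> Om1 -> 'I_d -> R) (N : R -> Om2 -> 'I_d -> R)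
    (m : nat) (f : (nat -> V d -> R) -> R) : R :=
  iterE E1 E2 M N (dyad m) f (2 ^ m) 0 (fun _ _ => 0).

Definition Ehat (Om1 Om2 : Type) (E1 : (Om1 -> R) -> R) (E2 : (Om2 -> R) -> R)
    (d : nat) (M : R -> Om1 -> 'I_d -> R) (N : R -> Om2 -> 'I_d -> R)
    (m : nat) (phi : (('I_(2 ^ m) * V d)%type -> R) -> R) : R :=
  Ehat_nat E1 E2 M N m (fun y => phi (fun p => y (val p.1) p.2)).

(* F^n_k[phi] = E^k[phi(X_{delta_n}, ..., X_{2^n delta_n} - X_{(2^n-1) delta_n})],
   where the i-th level-n increment is written as the sum of the 2^(k-n)
   level-k increments it consists of (this is its representation in H^k). *)
Definition Fnk (Om1 Om2 : Type) (E1 : (Om1 -> R) -> R) (E2 : (Om2 -> R) -> R)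
    (d : nat) (M : R -> Om1 -> 'I_d -> R) (N : R -> Om2 -> 'I_d -> R)
    (n k : nat) (phi : (('I_(2 ^ n) * V d)%type -> R) -> R) : R :=
  Ehat_nat E1 E2 M N k (fun y => phi (fun p =>
     \sum_(l < 2 ^ (k - n)) y (val p.1 * 2 ^ (k - n) + l)%N p.2)).

Definition tight (I : finType) (F : ((I -> R) -> R) -> R) : Prop :=
  forall eps : R, 0 < eps -> exists (Nr : R) (phi : (I -> R) -> R),
    [/\ 0 < Nr, bLip phi,
        (forall x, (if Nr <= vnorm x then 1 else 0) <= phi x) & F phi < eps].

End Defs.

Arguments Fnk {R Om1 Om2} E1 E2 {d} M N n k phi.
Arguments Ehat {R Om1 Om2} E1 E2 {d} M N m phi.

From HB Require Import structures.
From mathcomp Require Import all_boot all_order all_algebra.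
From mathcomp Require Import boolp classical_sets reals.
From mathcomp Require Import ring lra zify.
Import Order.TTheory GRing.Theory Num.Theory.
Set Implicit Arguments. Unset Strict Implicit. Unset Printing Implicit Defensive.
Local Open Scope ring_scope.

(* F is the supremum of the F^n_k over k >= n.  Each F^n_k iterates one-step
   sublinear expectations, and a one-step expectation preserves constants,
   monotonicity, subadditivity, positive homogeneity and bounded Lipschitz
   integrands; so the F^n_k are sublinear expectations bounded uniformly in k,
   their supremum F is one too, and F^n_k[phi] - F^n_k[psi] <= F^n_k[phi - psi]
   <= F[phi - psi].
   For tightness, independence of the increments makes the iterated expectation
   of a function of one coordinate of a level-n increment collapse to the
   expectation of that function of the corresponding increment of M (or N),
   whatever k.  The clipped coordinates min(|x_q| / a, 1) are at most |x_q| / a,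
   so by (A) their sum has F-expectation at most (1/a) sum_q Et[|increment_q|],
   which is small for large a, while the sum dominates the indicator of
   {|x| >= (#q + 1) a}. *)

Section BoundedLipschitz.
Variable R : realType.
Implicit Types (I J : finType).

Lemma vnorm_ge0 I (x : I -> R) : 0 <= vnorm x.
Proof. exact: sqrtr_ge0. Qed.

Lemma vnorm_sqr I (x : I -> R) : vnorm x ^+ 2 = \sum_i x i ^+ 2.
Proof. by rewrite sqr_sqrtr // sumr_ge0 // => i _; rewrite sqr_ge0. Qed.

Lemma normr_le_vnorm I (x : I -> R) i : `|x i| <= vnorm x.
Proof.
rewrite /vnorm -sqrtr_sqr; apply: ler_wsqrtr.
by rewrite (bigD1 i) //= lerDl sumr_ge0 // => l _; rewrite sqr_ge0.
Qed.

Lemma vnorm_joinBr I J (x : I -> R) (u u' : J -> R) :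
  vnorm (fun s => join x u s - join x u' s) = vnorm (fun j => u j - u' j).
Proof.
rewrite /vnorm big_sumType /= big1 ?add0r // => i _.
by rewrite subrr expr0n.
Qed.

Lemma vnorm_joinBl I J (x x' : I -> R) (u : J -> R) :
  vnorm (fun s => join x u s - join x' u s) = vnorm (fun i => x i - x' i).
Proof.
rewrite /vnorm big_sumType /= [X in _ + X]big1 ?addr0 // => j _.
by rewrite subrr expr0n.
Qed.

Lemma bLip_intro I (f : (I -> R) -> R) (C L : R) :
  (forall x, `|f x| <= C) ->
  (forall x y, `|f x - f y| <= L * vnorm (fun i => x i - y i)) -> bLip f.
Proof. by move=> fC fL; split; [exists C | exists L]. Qed.

Lemma bLip_ge0_consts I (f : (I -> R) -> R) : bLip f ->
  exists C L, [/\ 0 <= C, 0 <= L, (forall x, `|f x| <= C) &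
     (forall x y, `|f x - f y| <= L * vnorm (fun i => x i - y i))].
Proof.
move=> [[C fC] [L fL]]; exists C, `|L|; split => //.
- exact: le_trans (normr_ge0 _) (fC (fun _ => 0)).
- move=> x y; apply: le_trans (fL x y) _.
  by rewrite ler_wpM2r ?vnorm_ge0 ?ler_norm.
Qed.

Lemma bLip_cst I (c : R) : bLip (fun _ : I -> R => c).
Proof. by apply: (@bLip_intro _ _ `|c| 0) => // x y; rewrite subrr normr0 mul0r. Qed.

Lemma bLipD I (f g : (I -> R) -> R) : bLip f -> bLip g -> bLip (fun x => f x + g x).
Proof.
move=> /bLip_ge0_consts [C1 [L1 [_ _ fC fL]]] /bLip_ge0_consts [C2 [L2 [_ _ gC gL]]].
apply: (@bLip_intro _ _ (C1 + C2) (L1 + L2)) => [x|x y].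
  by apply: le_trans (ler_normD _ _) _; rewrite lerD.
rewrite mulrDl opprD addrACA.
by apply: le_trans (ler_normD _ _) _; rewrite lerD.
Qed.

Lemma bLipZ I (a : R) (f : (I -> R) -> R) : bLip f -> bLip (fun x => a * f x).
Proof.
move=> /bLip_ge0_consts [C [L [_ _ fC fL]]].
apply: (@bLip_intro _ _ (`|a| * C) (`|a| * L)) => [x|x y].
  by rewrite normrM ler_wpM2l.
by rewrite -mulrBr normrM -mulrA ler_wpM2l.
Qed.

Lemma bLipB I (f g : (I -> R) -> R) : bLip f -> bLip g -> bLip (fun x => f x - g x).
Proof.
move=> bf bg; have := bLipD bf (bLipZ (-1) bg).
by congr bLip; apply: funext => x; rewrite mulN1r.
Qed.

Lemma bLip_sum I (Q : Type) (s : seq Q) (F : Q -> (I -> R) -> R) :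
  (forall q, bLip (F q)) -> bLip (fun x => \sum_(q <- s) F q x).
Proof.
move=> bF; elim: s => [|q s IH].
  by under eq_fun do rewrite big_nil; exact: bLip_cst.
by under eq_fun do rewrite big_cons; exact: bLipD.
Qed.

Lemma vnorm_gt_coord (I : finType) (x : I -> R) (a : R) :
  0 < a -> (#|I|%:R + 1) * a <= vnorm x -> exists q, a < `|x q|.
Proof.
move=> a_gt0 large; apply/existsP; apply: contraLR large; rewrite negb_exists -ltNge.
move=> /forallP small.
have sum_le : \sum_q x q ^+ 2 <= #|I|%:R * a ^+ 2.
  rewrite -sum1_card natr_sum mulr_suml ler_sum // => q _; rewrite mul1r.
  rewrite -real_normK ?num_real // ler_pXn2r ?nnegrE ?normr_ge0 ?(ltW a_gt0) //.
  by rewrite leNgt small.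
rewrite -(@ltr_pXn2r _ 2) // ?nnegrE ?vnorm_ge0 ?mulr_ge0 ?addr_ge0 ?(ltW a_gt0) //.
rewrite vnorm_sqr; apply: le_lt_trans sum_le _; rewrite exprMn ltr_pM2r ?exprn_gt0 //.
have := ler0n R #|I|; nra.
Qed.

End BoundedLipschitz.

Section SublinearSpace.
Variables (R : realType) (Om : Type) (H : (Om -> R) -> Prop) (E : (Om -> R) -> R).
Hypothesis HE : sublinear_space H E.

Lemma memH_cst c : H (fun _ => c).
Proof.
case: HE => [[H0 _ _] Hcomp _].
exact: (@Hcomp 'I_0 (fun _ _ => 0) (fun _ => c) (fun _ => H0) (bLip_cst _ c)).
Qed.

Lemma memHD X Y : H X -> H Y -> H (fun w => X w + Y w).
Proof. by case: HE => [[_ HD _] _ _]; apply: HD. Qed.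

Lemma memHZ a X : H X -> H (fun w => a * X w).
Proof. by case: HE => [[_ _ HZ] _ _]; apply: HZ. Qed.

Lemma memHB X Y : H X -> H Y -> H (fun w => X w - Y w).
Proof.
move=> HX HY; have := memHD HX (memHZ (-1) HY).
by congr H; apply: funext => w; rewrite mulN1r.
Qed.

Lemma memH_comp (I : finType) (X : I -> Om -> R) (phi : (I -> R) -> R) :
  (forall i, H (X i)) -> bLip phi -> H (fun w => phi (fun i => X i w)).
Proof. by case: HE => [_ Hcomp _]; apply: Hcomp. Qed.

Lemma E_cst c : E (fun _ => c) = c.
Proof. by case: HE => [_ _ [_ Ec _ _]]. Qed.

Lemma E_mono X Y : H X -> H Y -> (forall w, X w <= Y w) -> E X <= E Y.
Proof. by case: HE => [_ _ [Emono _ _ _]]; apply: Emono. Qed.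

Lemma E_subadd X Y : H X -> H Y -> E (fun w => X w + Y w) <= E X + E Y.
Proof. by case: HE => [_ _ [_ _ Eadd _]]; apply: Eadd. Qed.

Lemma E_homo a X : H X -> 0 <= a -> E (fun w => a * X w) = a * E X.
Proof. by case: HE => [_ _ [_ _ _ Ehomo]]; apply: Ehomo. Qed.

Lemma E_le_addr X Y D : H X -> H Y -> (forall w, X w <= Y w + D) -> E X <= E Y + D.
Proof.
move=> HX HY XY; apply: le_trans (E_mono HX (memHD HY (memH_cst D)) XY) _.
by apply: le_trans (E_subadd HY (memH_cst D)) _; rewrite E_cst.
Qed.

Lemma normE_le X C : H X -> (forall w, `|X w| <= C) -> `|E X| <= C.
Proof.
move=> HX XC; rewrite ler_norml; apply/andP; split.
  rewrite -[X in X <= _](E_cst (- C)); apply: E_mono => // [|w]; first exact: memH_cst.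
  by have := XC w; rewrite ler_norml => /andP[].
rewrite -[C]add0r -{1}[0](E_cst 0); apply: E_le_addr => // [|w]; first exact: memH_cst.
by rewrite add0r; have := XC w; rewrite ler_norml => /andP[].
Qed.

Lemma distE_le X Y D : H X -> H Y -> (forall w, `|X w - Y w| <= D) -> `|E X - E Y| <= D.
Proof.
move=> HX HY XYD.
have XY : E X <= E Y + D.
  by apply: E_le_addr => // w; have := XYD w; rewrite ler_norml => /andP[_]; lra.
have YX : E Y <= E X + D.
  by apply: E_le_addr => // w; have := XYD w; rewrite ler_norml => /andP[]; lra.
rewrite ler_norml; apply/andP; split; lra.
Qed.

End SublinearSpace.

Section Clip.
Variables (R : realType) (a : R).
Hypothesis a_gt0 : 0 < a.

Definition clip (u : R) : R := Num.min (`|u| / a) 1.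

Lemma clip_ge0 u : 0 <= clip u.
Proof. by rewrite le_min ler01 divr_ge0 // ltW. Qed.

Lemma normr_clip u : `|clip u| <= 1.
Proof. by rewrite ger0_norm ?clip_ge0 // ge_min lexx orbT. Qed.

Lemma clip_le u : clip u <= `|u| / a.
Proof. by rewrite ge_min lexx. Qed.

Lemma clip1 u : 1 < `|u| / a -> clip u = 1.
Proof. by move=> gt1; rewrite /clip minEle leNgt gt1. Qed.

Lemma clip_lip u u' : `|clip u - clip u'| <= a^-1 * `|u - u'|.
Proof.
have dist : `| `|u| / a - `|u'| / a| <= a^-1 * `|u - u'|.
  rewrite -mulrBl normrM mulrC ger0_norm ?invr_ge0 ?(ltW a_gt0) //.
  by rewrite ler_pM2l ?invr_gt0 // ler_dist_dist.
apply: le_trans dist; rewrite /clip !minEle.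
move: (`|u| / a) (`|u'| / a) => x y.
have /andP[xy_ge xy_le] : - `|x - y| <= x - y <= `|x - y| by rewrite -ler_norml.
have := normr_ge0 (x - y).
by case: (leP x 1) => hx; case: (leP y 1) => hy n_ge0;
  rewrite ler_norml; apply/andP; split; lra.
Qed.

Lemma bLip_clip_coord (I : finType) (q : I) : bLip (fun x : I -> R => clip (x q)).
Proof.
apply: (@bLip_intro _ _ _ 1 a^-1) => [x|x y]; first exact: normr_clip.
apply: le_trans (clip_lip _ _) _; rewrite ler_pM2l ?invr_gt0 //.
exact: (normr_le_vnorm (fun i => x i - y i)).
Qed.

Lemma sum_clip_ge1 (I : finType) (x : I -> R) :
  (#|I|%:R + 1) * a <= vnorm x -> 1 <= \sum_q clip (x q).
Proof.
move=> /(vnorm_gt_coord a_gt0) [q xq]; rewrite (bigD1 q) //= clip1; last first.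
  by rewrite ltr_pdivlMr // mul1r.
by rewrite lerDl sumr_ge0 // => l _; exact: clip_ge0.
Qed.

End Clip.

Section Slots.
Variables (R : realType) (d : nat).
Implicit Types (y : nat -> V d -> R) (z : V d -> R) (f : (nat -> V d -> R) -> R).

Definition set_slot y c z : nat -> V d -> R := fun l => if l == c then z else y l.

Lemma set_slot_overwrite y c z z' : set_slot (set_slot y c z) c z' = set_slot y c z'.
Proof. by apply: funext => l; rewrite /set_slot; case: (l == c). Qed.

Lemma set_slotC y c l z z' : l != c ->
  set_slot (set_slot y l z) c z' = set_slot (set_slot y c z') l z.
Proof.
move=> lc; apply: funext => l'; rewrite /set_slot.
case: (eqVneq l' c) => [->|_]; first by rewrite eq_sym (negbTE lc).
by case: (l' == l).
Qed.

(* [iterE] integrates out one slot (increment) at a time, so the Lipschitz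
   bounds it propagates are slotwise. *)
Definition slot_bLip_with (C L : R) f :=
  [/\ 0 <= L, (forall y, `|f y| <= C) &
      (forall y c z z', `|f (set_slot y c z) - f (set_slot y c z')|
                          <= L * vnorm (fun i => z i - z' i))].

Definition slot_bLip f := exists C L, slot_bLip_with C L f.

Lemma slot_bLip_with_bLip C L f y c :
  slot_bLip_with C L f -> bLip (fun z => f (set_slot y c z)).
Proof. by move=> [_ fC fL]; apply: (@bLip_intro _ _ _ C L). Qed.

Lemma slot_bLip_bLip f y c : slot_bLip f -> bLip (fun z => f (set_slot y c z)).
Proof. by move=> [C [L fCL]]; exact: slot_bLip_with_bLip fCL. Qed.

Lemma slot_bLipD f g : slot_bLip f -> slot_bLip g -> slot_bLip (fun y => f y + g y).
Proof.
move=> [C1 [L1 [L1_ge0 fC fL]]] [C2 [L2 [L2_ge0 gC gL]]].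
exists (C1 + C2), (L1 + L2); split => [|y|y c z z'].
- exact: addr_ge0.
- by apply: le_trans (ler_normD _ _) _; rewrite lerD.
- rewrite mulrDl opprD addrACA.
  by apply: le_trans (ler_normD _ _) _; rewrite lerD.
Qed.

Lemma sum_block_indicator (B i m : nat) : (0 < B)%N ->
  \sum_(l < B) (((i * B + l)%N == m)%:R : R) = ((i == m %/ B)%N)%:R.
Proof.
move=> B_gt0.
have split_eq (l : 'I_B) : ((i * B + l)%N == m) = (i == m %/ B)%N && (val l == m %% B)%N.
  apply/eqP/andP => [<-|[/eqP -> /eqP ->]]; last by rewrite -divn_eq.
  by rewrite divnMDl // divn_small // addn0 modnMDl modn_small.
have [im|im] := eqVneq i (m %/ B)%N; last by rewrite big1 // => l _; rewrite split_eq (negbTE im).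
rewrite (bigD1 (Ordinal (ltn_pmod m B_gt0))) //= {1}im -divn_eq eqxx big1 ?addr0 // => l lm.
rewrite split_eq im eqxx /=; case: eqP => // lmB.
by case/eqP: lm; exact: val_inj.
Qed.

Lemma sum_ord_indicator_le1 (K q : nat) : \sum_(i < K) ((val i == q)%:R : R) <= 1.
Proof.
have [qK|Kq] := ltnP q K.
  rewrite (bigD1 (Ordinal qK)) //= eqxx big1 ?addr0 // => i iq.
  by case: eqP => // iq'; case/eqP: iq; exact: val_inj.
by rewrite big1 // => i _; case: eqP => // iq; move: (ltn_ord i); rewrite iq ltnNge Kq.
Qed.

Section BlockSums.
Variables (K B : nat).
Hypothesis B_gt0 : (0 < B)%N.

(* The level-n increments in terms of the level-k ones, as in [Fnk];
   there B = 2^(k-n). *)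
Definition block_sum y : ('I_K * V d)%type -> R :=
  fun p => \sum_(l < B) y (val p.1 * B + l)%N p.2.

Lemma block_sum_set_slotB y m z z' :
  (fun p => block_sum (set_slot y m z) p - block_sum (set_slot y m z') p) =
  (fun p => (val p.1 == (m %/ B)%N)%:R * (z p.2 - z' p.2)).
Proof.
apply: funext => p; rewrite /block_sum -sumrB -sum_block_indicator // mulr_suml.
by apply: eq_bigr => l _; rewrite /set_slot; case: eqP; rewrite ?mul1r ?subrr ?mul0r.
Qed.

Lemma vnorm_block_sum_set_slotB y m z z' :
  vnorm (fun p => block_sum (set_slot y m z) p - block_sum (set_slot y m z') p)
    <= vnorm (fun j => z j - z' j).
Proof.
rewrite block_sum_set_slotB /vnorm; apply: ler_wsqrtr.
rewrite -(pair_bigA _ (fun (i : 'I_K) j =>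
            ((val i == (m %/ B)%N)%:R * (z j - z' j)) ^+ 2)) /=.
under eq_bigr => i _.
  rewrite (_ : \sum_j _ = (val i == (m %/ B)%N)%:R * \sum_j (z j - z' j) ^+ 2); last first.
    rewrite mulr_sumr; apply: eq_bigr => j _.
    by rewrite exprMn; case: (_ == _); rewrite ?expr1n ?expr0n.
  over.
rewrite -mulr_suml ler_piMl ?sum_ord_indicator_le1 // sumr_ge0 // => j _.
exact: sqr_ge0.
Qed.

Lemma slot_bLip_block_sum (phi : (('I_K * V d)%type -> R) -> R) :
  bLip phi -> slot_bLip (fun y => phi (block_sum y)).
Proof.
move=> /bLip_ge0_consts [C [L [_ L_ge0 phiC phiL]]]; exists C, L; split => // y m z z'.
by apply: le_trans (phiL _ _) _; rewrite ler_wpM2l ?vnorm_block_sum_set_slotB.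
Qed.

End BlockSums.
End Slots.

Section Iteration.
Variables (R : realType) (d : nat) (Om1 Om2 : Type)
  (H1 : (Om1 -> R) -> Prop) (E1 : (Om1 -> R) -> R)
  (H2 : (Om2 -> R) -> Prop) (E2 : (Om2 -> R) -> R)
  (M : R -> Om1 -> 'I_d -> R) (N : R -> Om2 -> 'I_d -> R).
Hypotheses (HE1 : sublinear_space H1 E1) (HE2 : sublinear_space H2 E2).
Hypotheses (memM : forall t, 0 <= t -> in_H H1 (M t))
           (memN : forall t, 0 <= t -> in_H H2 (N t)).
Implicit Types (G : (V d -> R) -> R) (f : (nat -> V d -> R) -> R).

Section OneStep.
Variables (a b : R).
Hypotheses (a_ge0 : 0 <= a) (b_ge0 : 0 <= b).
Local Notation incr := (incrE E1 E2 M N a b).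

Definition incr_inner G (x : 'I_d -> R) : R :=
  E2 (fun w2 => G (join x (fun i => N b w2 i - N a w2 i))).

Lemma memH2_incr G x : bLip G -> H2 (fun w2 => G (join x (fun i => N b w2 i - N a w2 i))).
Proof.
move=> /bLip_ge0_consts [C [L [_ _ GC GL]]].
apply: (memH_comp HE2 (X := fun i w2 => N b w2 i - N a w2 i) (phi := fun u => G (join x u))).
  by move=> i; apply: (memHB HE2); [exact: memN | exact: memN].
by apply: (@bLip_intro _ _ _ C L) => // u u'; rewrite -(vnorm_joinBr x).
Qed.

Lemma bLip_incr_inner G : bLip G -> bLip (incr_inner G).
Proof.
move=> bG; have /bLip_ge0_consts [C [L [_ _ GC GL]]] := bG.
apply: (@bLip_intro _ _ _ C L) => [x|x x'].
  by apply: (normE_le HE2); [exact: memH2_incr | move=> w; exact: GC].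
apply: (distE_le HE2); try exact: memH2_incr.
by move=> w; rewrite -(vnorm_joinBl _ _ (fun i => N b w i - N a w i)).
Qed.

Lemma memH1_incr G : bLip G -> H1 (fun w1 => incr_inner G (fun i => M b w1 i - M a w1 i)).
Proof.
move=> bG; apply: (memH_comp HE1 (X := fun i w1 => M b w1 i - M a w1 i)).
  by move=> i; apply: (memHB HE1); [exact: memM | exact: memM].
exact: bLip_incr_inner.
Qed.

Lemma incrE_cst c : incr (fun _ => c) = c.
Proof. by rewrite /incrE (E_cst HE2) (E_cst HE1). Qed.

Lemma incrE_mono G G' : bLip G -> bLip G' -> (forall z, G z <= G' z) -> incr G <= incr G'.
Proof.
move=> bG bG' GG'; apply: (E_mono HE1); try exact: memH1_incr.
by move=> w; apply: (E_mono HE2); try exact: memH2_incr.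
Qed.

Lemma incrE_dist G G' D : bLip G -> bLip G' -> (forall z, `|G z - G' z| <= D) ->
  `|incr G - incr G'| <= D.
Proof.
move=> bG bG' GG'; apply: (distE_le HE1); try exact: memH1_incr.
by move=> w; apply: (distE_le HE2); try exact: memH2_incr.
Qed.

Lemma incrE_subadd G G' : bLip G -> bLip G' ->
  incr (fun z => G z + G' z) <= incr G + incr G'.
Proof.
move=> bG bG'; apply: le_trans (E_subadd HE1 (memH1_incr bG) (memH1_incr bG')).
apply: (E_mono HE1); first exact: memH1_incr (bLipD bG bG').
  by apply: (memHD HE1); exact: memH1_incr.
by move=> w; apply: (E_subadd HE2); exact: memH2_incr.
Qed.

Lemma incrE_homo c G : 0 <= c -> bLip G -> incr (fun z => c * G z) = c * incr G.
Proof.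
move=> c_ge0 bG; rewrite /incrE -(E_homo HE1 (memH1_incr bG) c_ge0).
congr E1; apply: funext => w.
by rewrite /incr_inner (E_homo HE2) //; exact: memH2_incr.
Qed.

End OneStep.

Variable delta : R.
Hypothesis delta_ge0 : 0 <= delta.
Local Notation iter := (iterE E1 E2 M N delta).

Lemma iterES f r c y : iter f r.+1 c y =
  incrE E1 E2 M N (c%:R * delta) (c.+1%:R * delta)
    (fun z => iter f r c.+1 (set_slot y c z)).
Proof. by []. Qed.

Lemma time_ge0 c : 0 <= c%:R * delta.
Proof. exact: mulr_ge0. Qed.

Lemma iterE_slot_bLip_with C L f r c :
  slot_bLip_with C L f -> slot_bLip_with C L (iter f r c).
Proof.
move=> fCL; elim: r c => [//|r IH] c; have [L_ge0 iterC iterL] := IH c.+1.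
split=> // [y|y l z z']; rewrite !iterES.
  have := incrE_dist (time_ge0 c) (time_ge0 c.+1)
            (slot_bLip_with_bLip y c (IH c.+1)) (bLip_cst _ 0) (D := C).
  by rewrite incrE_cst subr0; apply=> z; rewrite subr0.
have [<-|lc] := eqVneq l c.
  have overwrite w : (fun z0 => iter f r l.+1 (set_slot (set_slot y l w) l z0)) =
                     (fun z0 => iter f r l.+1 (set_slot y l z0)).
    by apply: funext => z0; rewrite set_slot_overwrite.
  by rewrite !overwrite subrr normr0 mulr_ge0 ?vnorm_ge0.
apply: incrE_dist; try exact: time_ge0; try exact: slot_bLip_with_bLip (IH c.+1).
by move=> z0; rewrite !(set_slotC _ _ _ lc).
Qed.

Lemma iterE_slot_bLip f r c : slot_bLip f -> slot_bLip (iter f r c).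
Proof. by move=> [C [L fCL]]; exists C, L; exact: iterE_slot_bLip_with. Qed.

Lemma iterE_norm_le C f r c y : slot_bLip f -> (forall y, `|f y| <= C) ->
  `|iter f r c y| <= C.
Proof.
move=> [C' [L [L_ge0 _ fL]]] fC.
by have [_ + _] := iterE_slot_bLip_with r c (And3 L_ge0 fC fL); apply.
Qed.

Lemma iterE_cst k r c y : iter (fun _ => k) r c y = k.
Proof.
elim: r c y => [//|r IH] c y; rewrite iterES.
by under eq_fun do rewrite IH; exact: incrE_cst.
Qed.

Lemma bLip_iterE_set_slot f r c y : slot_bLip f ->
  bLip (fun z => iter f r c.+1 (set_slot y c z)).
Proof. by move=> bf; exact/slot_bLip_bLip/iterE_slot_bLip. Qed.

Lemma iterE_mono f g r c y : slot_bLip f -> slot_bLip g -> (forall y, f y <= g y) ->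
  iter f r c y <= iter g r c y.
Proof.
move=> bf bg fg; elim: r c y => [|r IH] c y; first exact: fg.
rewrite !iterES; apply: incrE_mono; try exact: time_ge0;
  [exact: bLip_iterE_set_slot | exact: bLip_iterE_set_slot | by move=> z; exact: IH].
Qed.

Lemma iterE_subadd f g r c y : slot_bLip f -> slot_bLip g ->
  iter (fun y => f y + g y) r c y <= iter f r c y + iter g r c y.
Proof.
move=> bf bg; elim: r c y => [//|r IH] c y.
have bLip_f := @bLip_iterE_set_slot f r c y bf.
have bLip_g := @bLip_iterE_set_slot g r c y bg.
rewrite !iterES; apply: le_trans (incrE_subadd _ _ bLip_f bLip_g); try exact: time_ge0.
apply: incrE_mono; try exact: time_ge0.
- exact/bLip_iterE_set_slot/slot_bLipD.
- exact: bLipD.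
- by move=> z; exact: IH.
Qed.

Lemma iterE_homo a f r c y : 0 <= a -> slot_bLip f ->
  iter (fun y => a * f y) r c y = a * iter f r c y.
Proof.
move=> a_ge0 bf; elim: r c y => [//|r IH] c y.
rewrite !iterES; under eq_fun do rewrite IH.
by apply: incrE_homo => //; try exact: time_ge0; exact: bLip_iterE_set_slot.
Qed.

End Iteration.

Section IndependentIncrements.
Variables (R : realType) (d : nat) (Om : Type)
  (H : (Om -> R) -> Prop) (E : (Om -> R) -> R) (P : R -> Om -> 'I_d -> R).
Hypotheses (HE : sublinear_space H E) (indepP : indep_incr H E P).
Variables (j : 'I_d) (g : R -> R) (Cg Lg : R).
Hypotheses (gC : forall u, `|g u| <= Cg)
           (gL : forall u u', `|g u - g u'| <= Lg * `|u - u'|).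

Lemma E_incr_concat (s a b t : R) : 0 <= a -> a < b -> b <= t ->
  E (fun w => E (fun w' => g (s + (P b w j - P a w j) + (P t w' j - P b w' j)))) =
  E (fun w => g (s + (P t w j - P a w j))).
Proof.
move=> a_ge0 ab bt; have [<-|bt'] := eqVneq b t.
  congr E; apply: funext => w.
  by under eq_fun do rewrite subrr addr0; rewrite (E_cst HE).
have {bt'} {}bt : b < t by rewrite lt_neqAle bt' bt.
pose ts : 'I_3 -> R := fun i => if val i == 0%N then a else if val i == 1%N then b else t.
have ts_incr (i k : 'I_3) : (i < k)%N -> ts i < ts k.
  by case: i k => [[|[|[|i]]] ?] [[|[|[|k]]] ?] //= _; rewrite /ts /=; lra.
pose i0 := Ordinal (isT : (0 < 2)%N); pose i1 := Ordinal (isT : (1 < 2)%N).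
pose phi (v : (('I_2 * 'I_d) + 'I_d)%type -> R) :=
  g (s + (v (inl (i1, j)) - v (inl (i0, j))) + v (inr j)).
have L_ge0 : 0 <= Lg by have := gL 1 0; rewrite subr0 normr1 mulr1; apply: le_trans.
have bLip_phi : bLip phi.
  apply: (@bLip_intro _ _ _ Cg (3 * Lg)) => [v|v v']; first exact: gC.
  apply: le_trans (gL _ _) _.
  rewrite [3 * Lg]mulrC -mulrA; apply: ler_wpM2l => //.
  have coord q := normr_le_vnorm (fun i => v i - v' i) q.
  move: (coord (inl (i1, j))) (coord (inl (i0, j))) (coord (inr j)) => /=.
  set D := vnorm _.
  set x1 := v _; set x0 := v _; set x2 := v _.
  set y1 := v' _; set y0 := v' _; set y2 := v' _.
  have -> : s + (x1 - x0) + x2 - (s + (y1 - y0) + y2) = (x1 - y1) - (x0 - y0) + (x2 - y2).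
    by ring.
  have := ler_normD (x1 - y1 - (x0 - y0)) (x2 - y2); have := ler_normB (x1 - y1) (x0 - y0).
  lra.
case: indepP => _ _ /(_ 1%N ts a_ge0 ts_incr phi bLip_phi).
rewrite /phi /join /= /ts /= inordK //= => <-.
by congr E; apply: funext => w; congr g; ring.
Qed.

End IndependentIncrements.

Section BlockCoordinate.
Variables (R : realType) (d : nat) (Om1 Om2 Om : Type)
  (E1 : (Om1 -> R) -> R) (E2 : (Om2 -> R) -> R)
  (M : R -> Om1 -> 'I_d -> R) (N : R -> Om2 -> 'I_d -> R)
  (H : (Om -> R) -> Prop) (E : (Om -> R) -> R) (P : R -> Om -> 'I_d -> R).
Hypotheses (HE : sublinear_space H E) (indepP : indep_incr H E P).
Variables (delta : R) (s0 : V d) (j : 'I_d).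
Hypothesis delta_gt0 : 0 < delta.
(* Holds with [P = M] for [s0 = inl j] and with [P = N] for [s0 = inr j]. *)
Hypothesis incrE_coord : forall c (G : R -> R),
  incrE E1 E2 M N (c%:R * delta) (c.+1%:R * delta) (fun z => G (z s0)) =
  E (fun w => G (P (c.+1%:R * delta) w j - P (c%:R * delta) w j)).
Variables (g : R -> R) (Cg Lg : R).
Hypotheses (gC : forall u, `|g u| <= Cg)
           (gL : forall u u', `|g u - g u'| <= Lg * `|u - u'|).
Variables (c0 B : nat).
Local Notation iter := (iterE E1 E2 M N delta).

Let f (y : nat -> V d -> R) := g (\sum_(l < B) y (c0 + l)%N s0).
Let t1 := (c0 + B)%:R * delta.
Let Phi (c : nat) (s : R) := E (fun w => g (s + (P t1 w j - P (c%:R * delta) w j))).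

Lemma incrE_coord_cst c k : incrE E1 E2 M N (c%:R * delta) (c.+1%:R * delta) (fun _ => k) = k.
Proof. by rewrite (incrE_coord c (fun _ => k)) (E_cst HE). Qed.

Lemma iterE_after_block r c y : (c0 + B <= c)%N -> iter f r c y = f y.
Proof.
elim: r c y => [//|r IH] c y cB; rewrite iterES.
under eq_fun => z.
  rewrite IH ?(leq_trans cB) // /f (eq_bigr (fun l => y (c0 + val l)%N s0)); last first.
    by move=> l _; rewrite /set_slot ifN_eq //; have := ltn_ord l; lia.
  over.
exact: incrE_coord_cst.
Qed.

Lemma iterE_in_block m c y r : c = (c0 + B - m)%N -> (m <= B)%N -> (m <= r)%N ->
  iter f r c y = Phi c (\sum_(l < B - m) y (c0 + l)%N s0).
Proof.
elim: m c y r => [|m IH] c y r cE mB mr.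
  rewrite subn0 in cE; rewrite cE subn0 iterE_after_block // /Phi /f /t1.
  rewrite -[LHS](E_cst HE); congr E; apply: funext => w.
  by rewrite subrr addr0.
case: r mr => [//|r] mr; rewrite iterES.
set s := \sum_(l < B - m.+1) y (c0 + l)%N s0.
have cS : c.+1 = (c0 + B - m)%N by lia.
under eq_fun => z.
  rewrite (IH c.+1 _ r cS (ltnW mB) mr) (_ : \sum_(l < B - m) _ = s + z s0); last first.
    rewrite (_ : (B - m = (B - m.+1).+1)%N); last by lia.
    rewrite big_ord_recr /= /set_slot ifT; last by apply/eqP; lia.
    congr (_ + _); apply: eq_bigr => l _; rewrite ifN_eq //.
    by have := ltn_ord l; lia.
  over.
rewrite (incrE_coord c (fun u => Phi c.+1 (s + u))) /Phi.
apply: (E_incr_concat HE indepP j gC gL).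
- by rewrite mulr_ge0 // ltW.
- by rewrite ltr_pM2r // ltr_nat.
- by rewrite /t1 ler_pM2r // ler_nat; lia.
Qed.

Lemma iterE_before_block m c y r : (c + m = c0)%N -> (B + m <= r)%N ->
  iter f r c y = Phi c0 0.
Proof.
elim: m c y r => [|m IH] c y r cE Br.
  by rewrite addn0 in cE; subst c; rewrite (@iterE_in_block B) ?subnn ?big_ord0 //; lia.
case: r Br => [|r] Br; first lia.
rewrite iterES (_ : (fun z => _) = fun _ => Phi c0 0); first exact: incrE_coord_cst.
by apply: funext => z; apply: IH; lia.
Qed.

Lemma iterE_block_coord T y : (c0 + B <= T)%N ->
  iter f T 0 y = E (fun w => g (P t1 w j - P (c0%:R * delta) w j)).
Proof.
move=> BT; rewrite (@iterE_before_block c0) //; last by lia.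
by rewrite /Phi; congr E; apply: funext => w; rewrite add0r.
Qed.

End BlockCoordinate.

Lemma mem_indep_incr (R : realType) (Om : Type) (H : (Om -> R) -> Prop)
    (E : (Om -> R) -> R) (d : nat) (P : R -> Om -> 'I_d -> R) :
  indep_incr H E P -> forall t, 0 <= t -> in_H H (P t).
Proof. by case. Qed.

Lemma E_le_scale_Et (R : realType) (Om : Type) (H : (Om -> R) -> Prop)
    (E Et : (Om -> R) -> R) :
  sublinear_space H E -> sublinear_expectation H Et ->
  (forall X Y, H X -> H Y -> E X - E Y <= Et (fun w => X w - Y w)) ->
  forall (X V : Om -> R) (c : R), 0 <= c -> H X -> H V ->
  (forall w, X w <= c * V w) -> E X <= c * Et V.
Proof.
move=> HE HEt EEt X V c c_ge0 HX HV XV.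
have HEt' : sublinear_space H Et by case: HE => Hlin Hcomp _; split.
have := EEt X _ HX (memH_cst HE 0); rewrite (E_cst HE) subr0 => /le_trans; apply.
rewrite -(E_homo HEt' HV c_ge0); apply: (E_mono HEt') => [||w].
- exact: (memHB HE HX (memH_cst HE 0)).
- exact: (memHZ HE).
- by rewrite subr0.
Qed.

Lemma dyad_gt0 (R : realType) m : 0 < dyad R m.
Proof. by rewrite invr_gt0 exprn_gt0. Qed.

Lemma natr_mul_dyad (R : realType) n k c : (n <= k)%N ->
  (c * 2 ^ (k - n))%N%:R * dyad R k = c%:R * dyad R n.
Proof.
move=> nk; rewrite /dyad natrM natrX (_ : (2 : R) ^+ k = 2 ^+ n * 2 ^+ (k - n)).
  by rewrite invfM mulrACA divff ?mulr1 // expf_neq0 ?pnatr_eq0.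
by rewrite -exprD subnKC.
Qed.

Section Distributions.
Variables (R : realType) (d n : nat) (Om1 Om2 : Type)
  (H1 : (Om1 -> R) -> Prop) (E1 : (Om1 -> R) -> R)
  (H2 : (Om2 -> R) -> Prop) (E2 : (Om2 -> R) -> R)
  (M : R -> Om1 -> 'I_d -> R) (N : R -> Om2 -> 'I_d -> R).
Hypotheses (HE1 : sublinear_space H1 E1) (HE2 : sublinear_space H2 E2)
  (indepM : indep_incr H1 E1 M) (indepN : indep_incr H2 E2 N).
Local Notation Fnk := (Fnk E1 E2 M N n).
Local Notation blocks k := (@block_sum R d (2 ^ n) (2 ^ (k - n))).

Lemma Fnk_iterE k phi : Fnk k phi =
  iterE E1 E2 M N (dyad R k) (fun y => phi (blocks k y)) (2 ^ k) 0 (fun _ _ => 0).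
Proof. by []. Qed.

Lemma slot_bLip_blocks k phi : bLip phi -> slot_bLip (fun y => phi (blocks k y)).
Proof. exact/slot_bLip_block_sum/expn_gt0. Qed.

Let memM := mem_indep_incr indepM.
Let memN := mem_indep_incr indepN.
Let dyad_ge0 k := ltW (dyad_gt0 R k).

Lemma Fnk_cst k c : Fnk k (fun _ => c) = c.
Proof. exact: (iterE_cst M N HE1 HE2). Qed.

Lemma Fnk_norm_le k phi C : bLip phi -> (forall x, `|phi x| <= C) -> `|Fnk k phi| <= C.
Proof.
by move=> bphi phiC; apply: (iterE_norm_le HE1 HE2 memM memN (dyad_ge0 k));
  [exact: slot_bLip_blocks | move=> y; exact: phiC].
Qed.

Lemma Fnk_mono k phi psi : bLip phi -> bLip psi -> (forall x, phi x <= psi x) ->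
  Fnk k phi <= Fnk k psi.
Proof.
move=> bphi bpsi phipsi; apply: (iterE_mono HE1 HE2 memM memN (dyad_ge0 k));
  by [exact: slot_bLip_blocks | move=> y; exact: phipsi].
Qed.

Lemma Fnk_subadd k phi psi : bLip phi -> bLip psi ->
  Fnk k (fun x => phi x + psi x) <= Fnk k phi + Fnk k psi.
Proof.
by move=> bphi bpsi; apply: (iterE_subadd HE1 HE2 memM memN (dyad_ge0 k));
  exact: slot_bLip_blocks.
Qed.

Lemma Fnk_homo k a phi : 0 <= a -> bLip phi -> Fnk k (fun x => a * phi x) = a * Fnk k phi.
Proof.
by move=> a_ge0 bphi; apply: (iterE_homo HE1 HE2 memM memN (dyad_ge0 k)) => //;
  exact: slot_bLip_blocks.
Qed.

Lemma Fnk_sum k (Q : Type) (s : seq Q) (G : Q -> (('I_(2 ^ n) * V d)%type -> R) -> R) :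
  (forall q, bLip (G q)) -> Fnk k (fun x => \sum_(q <- s) G q x) <= \sum_(q <- s) Fnk k (G q).
Proof.
move=> bG; elim: s => [|q s IH].
  by under eq_fun do rewrite big_nil; rewrite Fnk_cst big_nil.
under eq_fun do rewrite big_cons; rewrite big_cons.
by apply: le_trans (Fnk_subadd _ (bG q) (bLip_sum s bG)) _; rewrite lerD2l.
Qed.

Definition Fsup phi : R := sup [set Fnk k phi | k in [set k | (n <= k)%N]].

Lemma Fnk_le_Fsup k phi : bLip phi -> (n <= k)%N -> Fnk k phi <= Fsup phi.
Proof.
move=> bphi nk; have /bLip_ge0_consts [C [_ [_ _ phiC _]]] := bphi.
apply: ub_le_sup; last by exists k.
by exists C => _ [k' _ <-]; apply: le_trans (ler_norm _) (Fnk_norm_le _ bphi phiC).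
Qed.

Lemma Fsup_le phi z : (forall k, (n <= k)%N -> Fnk k phi <= z) -> Fsup phi <= z.
Proof.
move=> Fz; apply: ge_sup; first by exists (Fnk n phi); exists n; first exact: leqnn.
by move=> _ [k nk <-]; exact: Fz.
Qed.

Lemma Fsup_sublinear : sublinear_expectation (@bLip R _) Fsup.
Proof.
split=> [phi psi bphi bpsi phipsi|c|phi psi bphi bpsi|a phi bphi a_ge0].
- apply: Fsup_le => k nk.
  exact: le_trans (Fnk_mono k bphi bpsi phipsi) (Fnk_le_Fsup bpsi nk).
- apply/eqP; rewrite eq_le; apply/andP; split; first by apply: Fsup_le => k _; rewrite Fnk_cst.
  by have := Fnk_le_Fsup (bLip_cst _ c) (leqnn n); rewrite Fnk_cst.
- apply: Fsup_le => k nk; apply: le_trans (Fnk_subadd k bphi bpsi) _.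
  by apply: lerD; exact: Fnk_le_Fsup.
- have [->|a_gt0] := eqVneq a 0.
    rewrite mul0r; apply/eqP; rewrite eq_le Fsup_le => [|k _]; last by rewrite Fnk_homo // mul0r.
    by have := Fnk_le_Fsup (bLipZ 0 bphi) (leqnn n); rewrite Fnk_homo // mul0r.
  have {}a_gt0 : 0 < a by rewrite lt_neqAle eq_sym a_gt0.
  apply/eqP; rewrite eq_le; apply/andP; split.
    by apply: Fsup_le => k nk; rewrite Fnk_homo // ler_wpM2l // Fnk_le_Fsup.
  rewrite -ler_pdivlMl //; apply: Fsup_le => k nk.
  by rewrite ler_pdivlMl // -Fnk_homo //; apply: Fnk_le_Fsup => //; exact: bLipZ.
Qed.

Lemma Fnk_sub_le_Fsup k phi psi : (n <= k)%N -> bLip phi -> bLip psi ->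
  Fnk k phi - Fnk k psi <= Fsup (fun x => phi x - psi x).
Proof.
move=> nk bphi bpsi; rewrite lerBlDl.
apply: le_trans (_ : Fnk k (fun x => psi x + (phi x - psi x)) <= _).
  by under eq_fun do rewrite addrC subrK.
have := Fnk_subadd k bpsi (bLipB bphi bpsi) => /le_trans; apply.
by rewrite lerD2l; exact: Fnk_le_Fsup (bLipB bphi bpsi) nk.
Qed.

Lemma incrE_coordM delta j c (G : R -> R) :
  incrE E1 E2 M N (c%:R * delta) (c.+1%:R * delta) (fun z => G (z (inl j))) =
  E1 (fun w => G (M (c.+1%:R * delta) w j - M (c%:R * delta) w j)).
Proof. by rewrite /incrE; congr E1; apply: funext => w /=; rewrite (E_cst HE2). Qed.

Lemma incrE_coordN delta j c (G : R -> R) :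
  incrE E1 E2 M N (c%:R * delta) (c.+1%:R * delta) (fun z => G (z (inr j))) =
  E2 (fun w => G (N (c.+1%:R * delta) w j - N (c%:R * delta) w j)).
Proof. by rewrite /incrE /= (E_cst HE1). Qed.

Section OneSide.
Variables (Om : Type) (H : (Om -> R) -> Prop) (E Et : (Om -> R) -> R)
  (P : R -> Om -> 'I_d -> R) (s0 : V d) (j : 'I_d).
Hypotheses (HE : sublinear_space H E) (indepP : indep_incr H E P)
  (HEt : sublinear_expectation H Et)
  (EEt : forall X Y, H X -> H Y -> E X - E Y <= Et (fun w => X w - Y w))
  (memH_vnorm : forall s t, 0 <= s -> 0 <= t ->
     H (fun w => vnorm (fun l => P s w l - P t w l))).
Hypothesis incrE_coord : forall delta c (G : R -> R),
  incrE E1 E2 M N (c%:R * delta) (c.+1%:R * delta) (fun z => G (z s0)) =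
  E (fun w => G (P (c.+1%:R * delta) w j - P (c%:R * delta) w j)).

Let dP (i : nat) (w : Om) (l : 'I_d) :=
  P (i.+1%:R * dyad R n) w l - P (i%:R * dyad R n) w l.

(* Independence of the increments of [P] makes the law of one coordinate of
   a level-n increment under [Fnk k] independent of [k]. *)
Lemma Fnk_coord k (i : 'I_(2 ^ n)) g Cg Lg : (n <= k)%N ->
  (forall u, `|g u| <= Cg) -> (forall u u', `|g u - g u'| <= Lg * `|u - u'|) ->
  Fnk k (fun x => g (x (i, s0))) = E (fun w => g (dP i w j)).
Proof.
move=> nk gC gL; rewrite Fnk_iterE.
have block_le : (val i * 2 ^ (k - n) + 2 ^ (k - n) <= 2 ^ k)%N.
  by rewrite addnC -mulSn -{2}(subnKC nk) expnD leq_mul2r ltn_ord orbT.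
rewrite (iterE_block_coord HE indepP (dyad_gt0 R k) (incrE_coord _) gC gL _ block_le).
by rewrite /dP addnC -mulSn !natr_mul_dyad.
Qed.

Lemma Fnk_clip_coord_le k (i : 'I_(2 ^ n)) a : (n <= k)%N -> 0 < a ->
  Fnk k (fun x => clip a (x (i, s0))) <= a^-1 * Et (fun w => vnorm (dP i w)).
Proof.
move=> nk a_gt0; rewrite (Fnk_coord _ nk (normr_clip a_gt0) (clip_lip a_gt0)).
have t_ge0 m : 0 <= m%:R * dyad R n by rewrite mulr_ge0 ?dyad_ge0.
apply: (E_le_scale_Et HE HEt EEt) => [||| w]; first by rewrite invr_ge0 ltW.
- apply: (memH_comp HE (X := fun l w => dP i w l) (phi := fun u => clip a (u j))).
    by move=> l; apply: (memHB HE); exact: (mem_indep_incr indepP (t_ge0 _)).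
  exact: bLip_clip_coord.
- exact: (memH_vnorm (t_ge0 _) (t_ge0 _)).
- apply: le_trans (clip_le _ _) _; rewrite mulrC ler_pM2l ?invr_gt0 //.
  exact: normr_le_vnorm.
Qed.

End OneSide.

Lemma Fsup_tight (Et1 : (Om1 -> R) -> R) (Et2 : (Om2 -> R) -> R) :
  sublinear_expectation H1 Et1 -> sublinear_expectation H2 Et2 ->
  (forall X Y, H1 X -> H1 Y -> E1 X - E1 Y <= Et1 (fun w => X w - Y w)) ->
  (forall X Y, H2 X -> H2 Y -> E2 X - E2 Y <= Et2 (fun w => X w - Y w)) ->
  (forall s t, 0 <= s -> 0 <= t ->
     H1 (fun w => vnorm (fun l => M s w l - M t w l)) /\
     H2 (fun w => vnorm (fun l => N s w l - N t w l))) ->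
  tight Fsup.
Proof.
move=> HEt1 HEt2 EEt1 EEt2 memH_vnorm eps eps_gt0.
pose dvnorm (Om : Type) (P : R -> Om -> 'I_d -> R) (i : nat) (w : Om) :=
  vnorm (fun l => P (i.+1%:R * dyad R n) w l - P (i%:R * dyad R n) w l).
pose bound (q : 'I_(2 ^ n) * V d) :=
  if q.2 is inl _ then Et1 (dvnorm _ M q.1) else Et2 (dvnorm _ N q.1).
pose T := \sum_q bound q; pose a := (`|T| + 1) / eps.
have T1_gt0 : 0 < `|T| + 1 by rewrite ltr_wpDl.
have a_gt0 : 0 < a by rewrite divr_gt0.
exists ((#|{: 'I_(2 ^ n) * V d}|%:R + 1) * a), (fun x => \sum_q clip a (x q)); split.
- by rewrite mulr_gt0 // ltr_wpDl.
- by apply: bLip_sum => q; exact: bLip_clip_coord.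
- by move=> x; case: ifP => [|_]; [exact: sum_clip_ge1 | apply: sumr_ge0 => q _; exact: clip_ge0].
have -> : eps = a^-1 * (`|T| + 1) by rewrite invf_div divfK // gt_eqF.
apply: le_lt_trans (_ : _ <= a^-1 * T) _; last first.
  by rewrite ltr_pM2l ?invr_gt0 //; apply: le_lt_trans (ler_norm T) _; rewrite ltrDl.
apply: Fsup_le => k nk.
apply: le_trans (@Fnk_sum k _ _ (fun q x => clip a (x q)) (fun q => bLip_clip_coord a_gt0 q)) _.
rewrite /T mulr_sumr; apply: ler_sum => -[i [j|j]] _.
- apply: (Fnk_clip_coord_le HE1 indepM HEt1 EEt1) => // [s t s_ge0 t_ge0|delta c G].
    by case: (memH_vnorm s t s_ge0 t_ge0).
  exact: incrE_coordM.
- apply: (Fnk_clip_coord_le HE2 indepN HEt2 EEt2) => // [s t s_ge0 t_ge0|delta c G].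
    by case: (memH_vnorm s t s_ge0 t_ge0).
  exact: incrE_coordN.
Qed.

End Distributions.

Arguments Fsup {R d} n {Om1 Om2} E1 E2 M N phi.

Theorem lemma3p3 (R : realType) (d n : nat) (Om1 Om2 : Type)
    (H1 : (Om1 -> R) -> Prop) (E1 : (Om1 -> R) -> R)
    (H2 : (Om2 -> R) -> Prop) (E2 : (Om2 -> R) -> R)
    (M : R -> Om1 -> 'I_d -> R) (N : R -> Om2 -> 'I_d -> R) :
  (1 <= n)%N ->
  sublinear_space H1 E1 -> sublinear_space H2 E2 ->
  indep_incr H1 E1 M -> indep_incr H2 E2 N ->
  condA H1 H2 E1 E2 M N ->
  exists F : ((('I_(2 ^ n) * V d)%type -> R) -> R) -> R,
    [/\ sublinear_expectation (@bLip R _) F,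
        tight F &
        forall k : nat, (n <= k)%N ->
        forall phi psi : (('I_(2 ^ n) * V d)%type -> R) -> R,
          bLip phi -> bLip psi ->
          Fnk E1 E2 M N n k phi - Fnk E1 E2 M N n k psi
            <= F (fun x => phi x - psi x)].
Proof.
move=> _ HE1 HE2 indepM indepN [Et1 [Et2 [[HEt1 HEt2] EEt1 EEt2 [memH_vnorm _]]]].
exists (Fsup n E1 E2 M N); split.
- exact: Fsup_sublinear HE1 HE2 indepM indepN.
- exact: (Fsup_tight n HE1 HE2 indepM indepN HEt1 HEt2 EEt1 EEt2 memH_vnorm).
- by move=> k nk phi psi bphi bpsi; exact: (Fnk_sub_le_Fsup HE1 HE2 indepM indepN).
Qed.
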